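(* Let $(X,\Sigma,\mu)$ be a semi-finite measure space and $A\in\Sigma$. Then: (i) the restriction of $\sigma(L^1,L^\infty)$ to $L^1(A)$ equals $\sigma(L^1(A),L^\infty(A))$, and the restriction of $\tau(L^\infty,L^1)$ to $L^\infty(A)$ equals $\tau(L^\infty(A),L^1(A))$, where these are the weak, resp. Mackey, topologies arising from the duality $\langle L^1(A),L^\infty(A)\rangle$; (ii) the order topology $\tau_O(L^\infty(A))$ equals the restriction of $\tau_O(L^\infty)$ to $L^\infty(A)$.
   Context: $L^\infty$, $L^1$ are the real spaces of essentially bounded, resp. integrable, functions, with duality $\langle f,g\rangle=\int fg\,d\mu$; $\sigma(\cdot,\cdot)$ and $\tau(\cdot,\cdot)$ denote weak and Mackey topologies of a duality. $L^\infty(A):=\{f\chi_A:f\in L^\infty\}$ and $L^1(A):=\{f\chi_A:f\in L^1\}$, identified with $L^\infty(A,\Sigma_A,\mu_A)$ and $L^1(A,\Sigma_A,\mu_A)$ where $\Sigma_A=\{A\cap E:E\in\Sigma\}$, $\mu_A=\mu|_{\Sigma_A}$. For a Riesz space $E$ (here with a.e. pointwise order), $\tau_O(E)$ is the topology whose closed sets are the sets $F$ such that no net in $F$ order converges to a point outside $F$, where $(x_\gamma)_{\gamma\in\Gamma}$ order converges to $x$ if there are nets $(y_\gamma)_{\gamma\in\Gamma}$ increasing with supremum $x$ and $(z_\gamma)_{\gamma\in\Gamma}$ decreasing with infimum $x$ with eventually $y_\gamma\le x_\gamma\le z_\gamma$. Restrictions mean subspace topologies. *)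

From HB Require Import structures.
From mathcomp Require Import all_boot all_order all_algebra.
From mathcomp Require Import all_classical all_reals all_analysis.
Set Implicit Arguments.
Unset Strict Implicit.
Unset Printing Implicit Defensive.
Import Order.TTheory GRing.Theory Num.Theory.
Local Open Scope classical_set_scope.
Local Open Scope ring_scope.

(* Elements of L^1, L^oo are represented by (measurable) functions T -> R;
   all sets of representatives considered below are saturated for
   a.e.-equality, and all topologies below only have a.e.-saturated open
   (closed) sets, so they are exactly the topologies on the quotient spaces. *)

Section Lspaces.
Context {d : measure_display} {T : measurableType d} {R : realType}.
Variable mu : {measure set T -> \bar R}.

Definition semi_finite : Prop :=
  forall E : set T, measurable E -> mu E = +oo%E ->
    exists F : set T, [/\ measurable F, F `<=` E & (0 < mu F < +oo)%E].

Definition ae_le (f g : T -> R) : Prop := {ae mu, forall x, f x <= g x}.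

Definition Linf : set (T -> R) :=
  [set f : T -> R | measurable_fun setT f /\ exists M : R, {ae mu, forall x, `|f x| <= M}].
Definition L1 : set (T -> R) :=
  [set f : T -> R | mu.-integrable setT (EFin \o f)].

(* L^oo(A), L^1(A): elements vanishing a.e. off A *)
Definition Linf_on (A : set T) : set (T -> R) :=
  [set f : T -> R | Linf f /\ {ae mu, forall x, ~ A x -> f x = 0}].
Definition L1_on (A : set T) : set (T -> R) :=
  [set f : T -> R | L1 f /\ {ae mu, forall x, ~ A x -> f x = 0}].

Definition pairing (f g : T -> R) : R := Rintegral mu setT (fun x => f x * g x).

Definition seminorm_topology (S : set (T -> R)) (P : set ((T -> R) -> R))
  : set (set (T -> R)) :=
  [set U | U `<=` S /\
     forall f, U f -> exists (ps : seq ((T -> R) -> R)) (e : R),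
       [/\ (forall p, p \in ps -> P p), 0 < e &
          [set g | S g /\ forall p, p \in ps -> p (g \- f) < e] `<=` U]].

Definition weak_top (E F : set (T -> R)) : set (set (T -> R)) :=
  seminorm_topology E [set p | exists g, F g /\ p = (fun f => `|pairing f g|)].

Definition compact_wrt (O : set (set (T -> R))) (K : set (T -> R)) : Prop :=
  forall C : set (set (T -> R)), C `<=` O -> K `<=` \bigcup_(U in C) U ->
    exists s : seq (set (T -> R)),
      (forall U, U \in s -> C U) /\ K `<=` \bigcup_(U in [set U | U \in s]) U.

Definition absolutely_convex (K : set (T -> R)) : Prop :=
  forall f g (a b : R), K f -> K g -> `|a| + `|b| <= 1 ->
    K (fun x => a * f x + b * g x).

Definition mackey_top (E F : set (T -> R)) : set (set (T -> R)) :=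
  seminorm_topology E
    [set p | exists K, [/\ K `<=` F, absolutely_convex K,
                        compact_wrt (weak_top F E) K &
                        p = (fun f => sup [set `|pairing f g| | g in K])]].

Definition restrict_top (O : set (set (T -> R))) (S : set (T -> R))
  : set (set (T -> R)) :=
  [set V | exists U, O U /\ V = U `&` S].

Definition directed (I : Type) (le : I -> I -> Prop) : Prop :=
  [/\ (forall i, le i i), (forall i j k, le i j -> le j k -> le i k),
      inhabited I & (forall i j, exists k, le i k /\ le j k)].

Definition is_sup_in (E : set (T -> R)) (I : Type) (y : I -> T -> R)
  (p : T -> R) : Prop :=
  [/\ E p, (forall i, ae_le (y i) p) &
      (forall q, E q -> (forall i, ae_le (y i) q) -> ae_le p q)].

Definition is_inf_in (E : set (T -> R)) (I : Type) (z : I -> T -> R)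
  (p : T -> R) : Prop :=
  [/\ E p, (forall i, ae_le p (z i)) &
      (forall q, E q -> (forall i, ae_le q (z i)) -> ae_le q p)].

Definition order_converges (E : set (T -> R)) (I : Type) (le : I -> I -> Prop)
  (x : I -> T -> R) (p : T -> R) : Prop :=
  exists (y z : I -> T -> R),
    [/\ (forall i, E (y i) /\ E (z i)),
        (forall i j, le i j -> ae_le (y i) (y j)) /\ is_sup_in E y p,
        (forall i j, le i j -> ae_le (z j) (z i)) /\ is_inf_in E z p &
        exists i0, forall i, le i0 i -> ae_le (y i) (x i) /\ ae_le (x i) (z i)].

Definition order_closed (E F : set (T -> R)) : Prop :=
  F `<=` E /\
  forall (I : Type) (le : I -> I -> Prop) (x : I -> T -> R) (p : T -> R),
    directed le -> (forall i, F (x i)) -> E p -> order_converges E le x p -> F p.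

Definition order_top (E : set (T -> R)) : set (set (T -> R)) :=
  [set U | U `<=` E /\ order_closed E (E `\` U)].

End Lspaces.

From HB Require Import structures.
From mathcomp Require Import all_boot all_order all_algebra.
From mathcomp Require Import all_classical all_reals all_analysis.
From mathcomp Require Import measurable_realfun.
Set Implicit Arguments.
Unset Strict Implicit.
Unset Printing Implicit Defensive.
Import Order.TTheory GRing.Theory Num.Theory numFieldTopology.Exports.
Local Open Scope classical_set_scope.
Local Open Scope ring_scope.

(* Everything is carried by the band projection f |-> f 1_A, written [f \_ A].
   It maps L^1 onto L^1(A) and L^oo onto L^oo(A), fixes their elements up to
   null sets, and is self-adjoint: <f 1_A, g> = <f, g 1_A>.  Hence a seminorm
   sup_(g in K) |<., g>| of sigma(L^1, L^oo) or tau(L^oo, L^1), composed with the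
   projection, is the seminorm of the projected set K 1_A, which defines the
   corresponding topology on the A-part; in the Mackey case the projection
   preserves sigma(L^1, L^oo)-compactness because it is weakly continuous.
   For the order topologies: if a net of L^oo(A) order converges in L^oo, its
   lower (upper) witnesses are eventually <= 0 (>= 0) off A, so the limit lies
   in L^oo(A) and the projected witnesses give order convergence in L^oo(A);
   conversely, witnesses in L^oo(A) remain witnesses in L^oo, since an upper
   bound q in L^oo may be replaced by q 1_A. *)

Section Pairing.
Context {d : measure_display} {T : measurableType d} {R : realType}.
Variable mu : {measure set T -> \bar R}.
Implicit Types (f g : T -> R).

Lemma pairing_ae f f' g g' :
  measurable_fun setT f -> measurable_fun setT f' ->
  measurable_fun setT g -> measurable_fun setT g' ->
  {ae mu, forall x, f x = f' x} -> {ae mu, forall x, g x = g' x} ->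
  pairing mu f g = pairing mu f' g'.
Proof.
move=> mf mf' mg mg' ff' gg'; congr fine; apply: ae_eq_integral => //.
- exact/measurable_EFinP/measurable_funM.
- exact/measurable_EFinP/measurable_funM.
- by apply: filterS2 ff' gg' => x /= -> ->.
Qed.

Lemma pairing0 g : pairing mu (cst 0) g = 0.
Proof.
rewrite /pairing /Rintegral; under eq_integral do rewrite mul0r.
by rewrite integral0.
Qed.

End Pairing.

Section Projection.
Context {d : measure_display} {T : measurableType d} {R : realType}.
Variables (mu : {measure set T -> \bar R}) (A : set T).
Hypothesis mA : measurable A.
Implicit Types (f g : T -> R) (K : set (T -> R)).

Definition vanishes_off f : Prop := {ae mu, forall x, ~ A x -> f x = 0}.

Lemma restrict_in f x : A x -> (f \_ A) x = f x.
Proof. by move=> Ax; rewrite patchT // inE. Qed.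

Lemma restrict_out f x : ~ A x -> (f \_ A) x = 0.
Proof. by move=> nAx; rewrite patchC // inE. Qed.

Lemma restrictB f g : (f \- g) \_ A = f \_ A \- g \_ A.
Proof. by apply/funext => x; rewrite /= !patchE; case: ifP; rewrite ?subr0. Qed.

Lemma vanishes_off_restrict f : vanishes_off (f \_ A).
Proof. exact: nearW (@restrict_out f). Qed.

Lemma ae_restrict f : vanishes_off f -> {ae mu, forall x, (f \_ A) x = f x}.
Proof.
apply: filterS => x f0; have [Ax|nAx] := pselect (A x).
  exact: restrict_in.
by rewrite restrict_out // f0.
Qed.

Lemma measurable_fun_restrict f :
  measurable_fun setT f -> measurable_fun setT (f \_ A).
Proof. by move=> mf; apply/(measurable_restrictT _ mA); exact: measurable_funTS. Qed.

Lemma L1_restrict f : L1 mu f -> L1_on mu A (f \_ A).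
Proof.
move=> /[dup] f1 /integrableP[/measurable_EFinP mf _].
split; last exact: vanishes_off_restrict.
apply: le_integrable f1 => //; first exact/measurable_EFinP/measurable_fun_restrict.
move=> x _ /=; rewrite lee_fin !patchE; case: ifP => _ //; by rewrite normr0.
Qed.

Lemma Linf_restrict f : Linf mu f -> Linf_on mu A (f \_ A).
Proof.
move=> [mf [M fM]]; split; last exact: vanishes_off_restrict.
split; first exact: measurable_fun_restrict.
exists (Num.max M 0); apply: filterS fM => x fxM; rewrite patchE.
by case: ifP => _; rewrite le_max ?fxM // normr0 lexx orbT.
Qed.

Lemma pairing_restrict f g : pairing mu (f \_ A) g = pairing mu f (g \_ A).
Proof.
congr Rintegral; apply/funext => x.
by rewrite !patchE; case: ifP; rewrite ?mul0r ?mulr0.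
Qed.

Lemma absolutely_convex_restrict K :
  absolutely_convex K -> absolutely_convex ((fun g => g \_ A) @` K).
Proof.
move=> acK _ _ a b [g1 K1 <-] [g2 K2 <-] ab.
exists (fun x => a * g1 x + b * g2 x); first exact: acK.
by apply/funext => x; rewrite !patchE; case: ifP => _ //; rewrite !mulr0 addr0.
Qed.

End Projection.

Section DualSeminorm.
Context {d : measure_display} {T : measurableType d} {R : realType}.
Variable mu : {measure set T -> \bar R}.
Implicit Types (f g h : T -> R) (K S E F : set (T -> R)).

Definition dual_seminorm K h : R := sup [set `|pairing mu h g| | g in K].

Definition dual_top S (KK : set (set (T -> R))) : set (set (T -> R)) :=
  seminorm_topology S (dual_seminorm @` KK).

Definition mackey_family E F : set (set (T -> R)) :=
  [set K | [/\ K `<=` F, absolutely_convex K & compact_wrt (weak_top mu F E) K]].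

Lemma weak_topE E F : weak_top mu E F = dual_top E [set [set g] | g in F].
Proof.
have dual1 g : dual_seminorm [set g] = (fun h => `|pairing mu h g|).
  by apply/funext => h; rewrite /dual_seminorm image_set1 sup1.
congr seminorm_topology; apply/seteqP; split => p.
  by move=> [g [Fg ->]]; exists [set g]; [exists g | rewrite dual1].
by move=> [_ [g Fg <-] <-]; exists g; rewrite dual1.
Qed.

Lemma mackey_topE E F : mackey_top mu E F = dual_top E (mackey_family E F).
Proof.
congr seminorm_topology; apply/seteqP; split => p.
  by move=> [K [KF acK cK ->]]; exists K.
by move=> [K [KF acK cK] <-]; exists K.
Qed.

Lemma eq_dual_seminorm K h h' :
  (forall g, K g -> pairing mu h g = pairing mu h' g) ->
  dual_seminorm K h = dual_seminorm K h'.
Proof. by move=> hh'; congr sup; apply: eq_imagel => g /hh' ->. Qed.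

Lemma dual_seminorm0 K : dual_seminorm K (cst 0) = 0.
Proof.
rewrite /dual_seminorm; under eq_imagel do rewrite pairing0 normr0.
have [->|/set0P[g0 Kg0]] := eqVneq K set0; first by rewrite image_set0 sup0.
suff -> : [set 0 | _ in K] = [set 0 : R] by rewrite sup1.
by apply/seteqP; split => [_ [g _ <-] //|_ ->]; exists g0.
Qed.

Lemma dual_seminorm_ae K h h' : (forall g, K g -> measurable_fun setT g) ->
  measurable_fun setT h -> measurable_fun setT h' ->
  {ae mu, forall x, h x = h' x} -> dual_seminorm K h = dual_seminorm K h'.
Proof.
move=> Kmeas mh mh' hh'; apply: eq_dual_seminorm => g Kg.
by apply: (pairing_ae mh mh' (Kmeas g Kg) (Kmeas g Kg) hh'); exact: aeW.
Qed.

Lemma dual_seminorm_restrict (A : set T) K h :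
  dual_seminorm K (h \_ A) = dual_seminorm ((fun g => g \_ A) @` K) h.
Proof.
rewrite /dual_seminorm image_comp; congr sup.
by apply: eq_imagel => g _ /=; rewrite pairing_restrict.
Qed.

End DualSeminorm.

Section DualTopRestrict.
Context {d : measure_display} {T : measurableType d} {R : realType}.
Variables (mu : {measure set T -> \bar R}) (A : set T) (S : set (T -> R)).
Variables (KK KK' : set (set (T -> R))).
Hypotheses (mA : measurable A) (S_meas : forall f, S f -> measurable_fun setT f)
  (S_restrict : forall f, S f -> S (f \_ A))
  (KK_meas : forall K, KK K -> forall g, K g -> measurable_fun setT g)
  (KK'_KK : KK' `<=` KK)
  (KK_restrict : forall K, KK K -> KK' ((fun g => g \_ A) @` K)).

Local Notation restrA := (fun h : T -> R => h \_ A).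
Local Notation SA := [set f | S f /\ vanishes_off mu A f].

Lemma dual_top_preimage_restrict V :
  dual_top mu SA KK' V -> dual_top mu S KK (S `&` restrA @^-1` V).
Proof.
move=> [_ openV]; split => [h [] //|h [Sh Vh]].
have [ps [e [ps_KK' e0 ball]]] := openV _ Vh.
exists (map (fun p => p \o restrA) ps), e; split => //.
  move=> _ /mapP[p /ps_KK' [K KK'K <-] ->].
  exists (restrA @` K); first exact/KK'_KK/KK_restrict/KK'_KK.
  by apply/funext => k; rewrite /= dual_seminorm_restrict.
move=> k [Sk kh]; split => //; apply: ball; split.
  by split; [exact: S_restrict | exact: vanishes_off_restrict].
by move=> p ps_p; rewrite -restrictB; exact: (kh _ (map_f _ ps_p)).
Qed.

Lemma dual_top_restrict U : dual_top mu S KK U -> dual_top mu SA KK' (U `&` SA).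
Proof.
move=> [_ openU]; split => [f [] //|f [Uf [Sf f0]]].
have [ps [e [ps_KK e0 ball]]] := openU _ Uf.
exists (map (fun p => p \o restrA) ps), e; split => //.
  move=> _ /mapP[p /ps_KK [K KK_K <-] ->].
  exists (restrA @` K); first exact: KK_restrict.
  by apply/funext => k; rewrite /= dual_seminorm_restrict.
move=> k [[Sk k0] kf]; split => //; apply: ball; split => // p ps_p.
have := kf _ (map_f (fun p : (T -> R) -> R => p \o restrA) ps_p).
have [K KK_K <-] := ps_KK p ps_p.
have mkf : measurable_fun setT (k \- f) by apply: measurable_funB; exact: S_meas.
have kf0 : vanishes_off mu A (k \- f).
  by apply: filterS2 k0 f0 => x /= kx fx nAx; rewrite kx // fx // subr0.
have mkfA := measurable_fun_restrict mA mkf.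
by rewrite /= (dual_seminorm_ae (KK_meas KK_K) mkfA mkf (ae_restrict kf0)).
Qed.

Lemma dual_top_ae_closed V f g : dual_top mu SA KK' V -> V f -> SA g ->
  {ae mu, forall x, g x = f x} -> V g.
Proof.
move=> [VSA openV] Vf /[dup] SAg [Sg _] gf; have [Sf _] := VSA f Vf.
have [ps [e [ps_KK' e0 ball]]] := openV f Vf.
apply: ball; split => // p /ps_KK' [K /KK'_KK KK_K <-].
have mgf : measurable_fun setT (g \- f) by apply: measurable_funB; exact: S_meas.
have gf0 : {ae mu, forall x, (g \- f) x = cst 0 x}.
  by apply: filterS gf => x /= ->; rewrite subrr.
by rewrite (dual_seminorm_ae (KK_meas KK_K) mgf _ gf0) ?dual_seminorm0.
Qed.

Lemma restrict_dual_top : restrict_top (dual_top mu S KK) SA = dual_top mu SA KK'.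
Proof.
apply/seteqP; split => V.
  by move=> [U [openU ->]]; exact: dual_top_restrict.
move=> openV; exists (S `&` restrA @^-1` V).
split; first exact: dual_top_preimage_restrict.
have VSA : V `<=` SA by case: openV.
have SA_restrict f : S f -> SA (f \_ A).
  by move=> Sf; split; [exact: S_restrict | exact: vanishes_off_restrict].
apply/seteqP; split => f.
  move=> Vf; have [Sf f0] := VSA f Vf; split => //; split => //.
  exact: (dual_top_ae_closed openV Vf (SA_restrict f Sf) (ae_restrict f0)).
move=> [[Sf Vf] [_ f0]]; apply: (dual_top_ae_closed openV Vf) => //.
by apply: filterS (ae_restrict f0) => x ->.
Qed.

End DualTopRestrict.

Lemma lift_seq_image (X Y : eqType) (Q : set Y) (F : Y -> X) (s' : seq X) :
  (forall x, x \in s' -> (F @` Q) x) ->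
  exists2 s : seq Y, (forall y, y \in s -> Q y) &
    (forall x, x \in s' -> (F @` [set y | y \in s]) x).
Proof.
elim: s' => [|x s' IH] s'Q; first by exists [::].
have [y Qy <-] := s'Q _ (mem_head _ _).
have [|s sQ s's] := IH; first by move=> z zs'; apply: s'Q; rewrite inE zs' orbT.
exists (y :: s) => z; first by rewrite inE => /predU1P[->|/sQ].
rewrite inE => /predU1P[->|/s's[w ws <-]]; first by exists y => //; exact: mem_head.
by exists w => //; rewrite /= inE ws orbT.
Qed.

Section CompactImage.
Context {d : measure_display} {T : measurableType d} {R : realType}.
Implicit Types (O : set (set (T -> R))) (S K : set (T -> R)).

Lemma compact_wrt_image O O' S K (phi : (T -> R) -> T -> R) :
  (forall V, O' V -> O (S `&` phi @^-1` V)) -> K `<=` S ->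
  compact_wrt O K -> compact_wrt O' (phi @` K).
Proof.
move=> phi_cont KS cK C CO' phiKC.
pose C' := [set S `&` phi @^-1` W | W in C].
have C'O : C' `<=` O by move=> _ [W CW <-]; exact/phi_cont/CO'.
have KC' : K `<=` \bigcup_(U in C') U.
  move=> g Kg; have [W CW Wg] := phiKC _ (imageP phi Kg).
  by exists (S `&` phi @^-1` W); [exists W | split => //; exact: KS].
have [s' [s'C Ks']] := cK C' C'O KC'.
have [s sC s's] := lift_seq_image s'C.
exists s; split => // _ [g Kg <-].
by have [_ /s's[W sW <-] [_ Wg]] := Ks' g Kg; exists W.
Qed.

End CompactImage.

Section TopologiesOnA.
Context {d : measure_display} {T : measurableType d} {R : realType}.
Variables (mu : {measure set T -> \bar R}) (A : set T).
Hypothesis mA : measurable A.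
Implicit Types (f g : T -> R) (K : set (T -> R)).

Local Notation restrA := (fun h : T -> R => h \_ A).

Lemma L1_measurable f : L1 mu f -> measurable_fun setT f.
Proof. by move=> /integrableP[/measurable_EFinP]. Qed.

Lemma Linf_measurable f : Linf mu f -> measurable_fun setT f.
Proof. by case. Qed.

Lemma Linf_singletons_meas K :
  [set [set g] | g in Linf mu] K -> forall g, K g -> measurable_fun setT g.
Proof. by move=> [g /Linf_measurable mg <-] _ ->. Qed.

Lemma Linf_on_singletons_sub :
  [set [set g] | g in Linf_on mu A] `<=` [set [set g] | g in Linf mu].
Proof. by move=> _ [g [Lg _] <-]; exists g. Qed.

Lemma Linf_singletons_restrict K : [set [set g] | g in Linf mu] K ->
  [set [set g] | g in Linf_on mu A] (restrA @` K).
Proof.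
by move=> [g Lg <-]; exists (g \_ A); [exact: Linf_restrict | rewrite image_set1].
Qed.

Lemma weak_top_L1_on :
  restrict_top (weak_top mu (L1 mu) (Linf mu)) (L1_on mu A)
  = weak_top mu (L1_on mu A) (Linf_on mu A).
Proof.
rewrite !weak_topE; apply: (restrict_dual_top mu mA L1_measurable _
  Linf_singletons_meas Linf_on_singletons_sub Linf_singletons_restrict).
by move=> f /(L1_restrict mA) [].
Qed.

Lemma weak_top_preimage_restrict V :
  weak_top mu (L1_on mu A) (Linf_on mu A) V ->
  weak_top mu (L1 mu) (Linf mu) (L1 mu `&` restrA @^-1` V).
Proof.
rewrite !weak_topE; apply: (dual_top_preimage_restrict _
  Linf_on_singletons_sub Linf_singletons_restrict).
by move=> f /(L1_restrict mA) [].
Qed.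

Lemma compact_wrt_L1_on K : K `<=` L1_on mu A ->
  compact_wrt (weak_top mu (L1_on mu A) (Linf_on mu A)) K ->
  compact_wrt (weak_top mu (L1 mu) (Linf mu)) K.
Proof.
move=> KA; rewrite -[X in _ -> compact_wrt _ X]image_id.
apply: (compact_wrt_image _ KA).
by move=> V openV; rewrite -weak_top_L1_on setIC; exists V.
Qed.

Lemma compact_wrt_restrict K : K `<=` L1 mu ->
  compact_wrt (weak_top mu (L1 mu) (Linf mu)) K ->
  compact_wrt (weak_top mu (L1_on mu A) (Linf_on mu A)) (restrA @` K).
Proof. exact: compact_wrt_image weak_top_preimage_restrict. Qed.

Lemma mackey_top_Linf_on :
  restrict_top (mackey_top mu (Linf mu) (L1 mu)) (Linf_on mu A)
  = mackey_top mu (Linf_on mu A) (L1_on mu A).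
Proof.
rewrite !mackey_topE; apply: (restrict_dual_top mu mA Linf_measurable).
- by move=> f /(Linf_restrict mA) [].
- by move=> K [KL _ _] g /KL /L1_measurable.
- move=> K [KA acK cK]; split => //; last exact: compact_wrt_L1_on.
  by move=> g /KA [].
- move=> K [KL acK cK]; split.
  + by move=> _ [g /KL /(L1_restrict mA) g1 <-].
  + exact: absolutely_convex_restrict.
  + exact: compact_wrt_restrict.
Qed.

End TopologiesOnA.

Section OrderTopologySub.
Context {d : measure_display} {T : measurableType d} {R : realType}.
Variable mu : {measure set T -> \bar R}.
Implicit Types E : set (T -> R).

Lemma order_top_sub E E' : E' `<=` E ->
  (forall I (le : I -> I -> Prop) x p, directed le ->
     order_converges mu E' le x p -> order_converges mu E le x p) ->
  (forall I (le : I -> I -> Prop) x p, directed le -> (forall i, E' (x i)) ->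
     E p -> order_converges mu E le x p -> E' p /\ order_converges mu E' le x p) ->
  order_top mu E' = restrict_top (order_top mu E) E'.
Proof.
move=> E'E up down; apply/seteqP; split => V.
  move=> [VE' [_ closedV]]; exists (V `|` (E `\` E')); split.
    split; first by move=> f [/VE' /E'E|[]].
    split => [f [] //|I le x p dir Ex Ep cvx].
    have E'x i : E' (x i).
      have [Exi nVx] := Ex i; have [//|nE'x] := pselect (E' (x i)).
      by exfalso; apply: nVx; right.
    have [E'p cvx'] := down _ _ _ _ dir E'x Ep cvx.
    have [|_ nVp] := closedV _ _ _ _ dir _ E'p cvx'.
      by move=> i; split => // Vx; have [_] := Ex i; apply; left.
    by split => // -[//|[]].
  apply/seteqP; split => [f Vf|f [[//|[_ nE'f]] /nE'f []]].
  by split; [left | exact: VE'].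
move=> [U [[_ [_ closedU]] ->]]; split => [f [] //|].
split => [f [] //|I le x p dir Ex E'p cvx].
have [_ nUp] : (E `\` U) p.
  apply: closedU dir _ (E'E _ E'p) (up _ _ _ _ dir cvx).
  by move=> i; have [E'x nUx] := Ex i; split => [|Ux]; [exact: E'E | apply: nUx].
by split => // -[].
Qed.

End OrderTopologySub.

Section OrderBounds.
Context {d : measure_display} {T : measurableType d} {R : realType}.
Variable mu : {measure set T -> \bar R}.

Definition ae_rel (r : rel R) (f g : T -> R) : Prop :=
  {ae mu, forall x, r (f x) (g x)}.

(* [is_bound_in <=%R] is [is_sup_in] and [is_bound_in >=%R] is [is_inf_in]. *)
Definition is_bound_in (r : rel R) (E : set (T -> R)) (I : Type)
    (y : I -> T -> R) (p : T -> R) : Prop :=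
  [/\ E p, forall i, ae_rel r (y i) p &
      forall q, E q -> (forall i, ae_rel r (y i) q) -> ae_rel r p q].

Variables (A : set T) (r : rel R).
Hypotheses (mA : measurable A) (r_refl : reflexive r) (r_trans : transitive r).
Implicit Types (f g p q : T -> R).

Lemma ae_rel_restrict f g : ae_rel r f g -> ae_rel r (f \_ A) (g \_ A).
Proof. by apply: filterS => x fg; rewrite !patchE; case: ifP. Qed.

Lemma is_bound_in_Linf I (y : I -> T -> R) p (i0 : I) :
  (forall i, Linf_on mu A (y i)) ->
  is_bound_in r (Linf_on mu A) y p -> is_bound_in r (Linf mu) y p.
Proof.
move=> Ay [[Lp p0] yp ymin]; split => // q Lq yq.
have pqA : ae_rel r p (q \_ A).
  apply: ymin; first exact: Linf_restrict.
  move=> i; have [_ y0] := Ay i.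
  apply: filterS2 (yq i) y0 => x yqx y0x; have [Ax|nAx] := pselect (A x).
    by rewrite restrict_in.
  by rewrite restrict_out // y0x.
have [_ y00] := Ay i0.
have p_y0 : {ae mu, forall x, ~ A x -> p x = y i0 x}.
  by apply: filterS2 p0 y00 => x p0x y0x nAx; rewrite p0x ?y0x.
apply: filterS3 pqA (yq i0) p_y0 => x pq yq0 py0; have [Ax|nAx] := pselect (A x).
  by rewrite -(restrict_in q Ax).
by rewrite py0.
Qed.

Lemma eventually_vanishing I (le : I -> I -> Prop) (x y : I -> T -> R) (i0 : I) :
  directed le -> (forall i, vanishes_off mu A (x i)) ->
  (forall i j, le i j -> ae_rel r (y i) (y j)) ->
  (forall i, le i0 i -> ae_rel r (y i) (x i)) ->
  forall i, {ae mu, forall t, ~ A t -> r (y i t) 0}.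
Proof.
move=> [_ _ _ dir] x0 ymono yx i; have [k [ik i0k]] := dir i i0.
apply: filterS3 (ymono _ _ ik) (yx _ i0k) (x0 k) => t yy yx0 x0t nAt.
by rewrite -(x0t nAt); exact: r_trans yy yx0.
Qed.

Lemma bound_vanishes I (y : I -> T -> R) p :
  (forall i, {ae mu, forall t, ~ A t -> r (y i t) 0}) ->
  is_bound_in r (Linf mu) y p -> {ae mu, forall t, ~ A t -> r (p t) 0}.
Proof.
move=> y0 [Lp yp ymin].
have : ae_rel r p (p \_ A).
  apply: ymin; first by have [] := Linf_restrict mA Lp.
  move=> i; apply: filterS2 (yp i) (y0 i) => t ypt y0t.
  have [At|nAt] := pselect (A t); first by rewrite restrict_in.
  by rewrite restrict_out //; exact: y0t.
by apply: filterS => t ppA nAt; rewrite -(restrict_out p nAt).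
Qed.

Lemma is_bound_in_Linf_on I (y : I -> T -> R) p :
  (forall i, {ae mu, forall t, ~ A t -> r (y i t) 0}) -> Linf_on mu A p ->
  is_bound_in r (Linf mu) y p -> is_bound_in r (Linf_on mu A) (fun i => y i \_ A) p.
Proof.
move=> y0 Ap [_ yp ymin]; have [_ p0] := Ap; split => //.
  move=> i; apply: filterS2 (ae_rel_restrict (yp i)) (ae_restrict p0) => t yp_t pA.
  by rewrite -pA.
move=> q [Lq q0] yq; apply: ymin => // i.
apply: filterS3 (yq i) (y0 i) q0 => t yqt y0t q0t.
have [At|nAt] := pselect (A t); first by rewrite -(restrict_in (y i) At).
by rewrite q0t //; exact: y0t.
Qed.

End OrderBounds.

Section OrderTopologyOnA.
Context {d : measure_display} {T : measurableType d} {R : realType}.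
Variables (mu : {measure set T -> \bar R}) (A : set T).
Hypothesis mA : measurable A.

Lemma order_converges_Linf I (le : I -> I -> Prop) x p : directed le ->
  order_converges mu (Linf_on mu A) le x p -> order_converges mu (Linf mu) le x p.
Proof.
move=> [_ _ [i0] _] [y [z [yzA [ymono ysup] [zmono zinf] sandwich]]].
exists y, z; split => //.
- by move=> i; have [[Ly _] [Lz _]] := yzA i.
- split => //.
  exact: (is_bound_in_Linf (r := <=%R) mA lexx i0 (fun i => (yzA i).1) ysup).
- split => //.
  exact: (is_bound_in_Linf (r := >=%R) mA lexx i0 (fun i => (yzA i).2) zinf).
Qed.

Lemma order_converges_Linf_on I (le : I -> I -> Prop) x p : directed le ->
  (forall i, Linf_on mu A (x i)) -> Linf mu p ->
  order_converges mu (Linf mu) le x p ->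
  Linf_on mu A p /\ order_converges mu (Linf_on mu A) le x p.
Proof.
move=> dir Ax Lp [y [z [yzL [ymono ysup] [zmono zinf] [i0 sandwich]]]].
have x0 i : vanishes_off mu A (x i) by case: (Ax i).
have y0 := eventually_vanishing (r := <=%R) le_trans dir x0 ymono
  (fun i i0i => (sandwich i i0i).1).
have z0 := eventually_vanishing (r := >=%R) ge_trans dir x0 zmono
  (fun i i0i => (sandwich i i0i).2).
have Ap : Linf_on mu A p.
  split => //.
  apply: filterS2 (bound_vanishes mA y0 ysup) (bound_vanishes mA z0 zinf).
  by move=> t ple pge nAt; apply/eqP; rewrite eq_le ple //; exact: pge.
split => //; exists (fun i => y i \_ A), (fun i => z i \_ A); split.
- by move=> i; have [Ly Lz] := yzL i; split; exact: Linf_restrict.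
- split; first by move=> i j /ymono /(ae_rel_restrict A lexx).
  exact: (is_bound_in_Linf_on (r := <=%R) lexx y0 Ap ysup).
- split; first by move=> i j /zmono /(ae_rel_restrict A lexx).
  exact: (is_bound_in_Linf_on (r := >=%R) lexx z0 Ap zinf).
- exists i0 => i /sandwich [yx xz]; split.
    apply: filterS2 (ae_rel_restrict A (r := <=%R) lexx yx) (ae_restrict (x0 i)).
    by move=> t + <-.
  apply: filterS2 (ae_rel_restrict A (r := >=%R) lexx xz) (ae_restrict (x0 i)).
  by move=> t + <-.
Qed.

Lemma order_top_Linf_on :
  order_top mu (Linf_on mu A) = restrict_top (order_top mu (Linf mu)) (Linf_on mu A).
Proof.
apply: order_top_sub; first by move=> f [].
  exact: order_converges_Linf.
exact: order_converges_Linf_on.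
Qed.

End OrderTopologyOnA.

Theorem mainTheorem9 (d : measure_display) (T : measurableType d) (R : realType)
  (mu : {measure set T -> \bar R}) (A : set T) :
  semi_finite mu -> measurable A ->
  [/\ restrict_top (weak_top mu (L1 mu) (Linf mu)) (L1_on mu A)
        = weak_top mu (L1_on mu A) (Linf_on mu A),
      restrict_top (mackey_top mu (Linf mu) (L1 mu)) (Linf_on mu A)
        = mackey_top mu (Linf_on mu A) (L1_on mu A) &
      order_top mu (Linf_on mu A)
        = restrict_top (order_top mu (Linf mu)) (Linf_on mu A)].
Proof.
move=> _ mA; split.
- exact: weak_top_L1_on.
- exact: mackey_top_Linf_on.
- exact: order_top_Linf_on.
Qed.
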